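(* Let $M_\sharp=X_\sharp X_\sharp^\top$ with $X_\sharp\in\mathbb{R}^{d\times r}$ of rank $r$, let $\mathcal{A}\colon\mathbb{R}^{d\times d}\to\mathbb{R}^m$ be linear and $b\in\mathbb{R}^m$. Suppose there exist a set $\mathcal{I}\subset\{1,\dots,m\}$ and a constant $\kappa_3>0$ such that (i) $b_i=\mathcal{A}(M_\sharp)_i$ for all $i\notin\mathcal{I}$, and (ii) for every $W\in\mathbb{R}^{d\times d}$ of rank at most $2r$, $$\kappa_3\|W\|_F\le\frac1m\|\mathcal{A}_{\mathcal{I}^c}(W)\|_1-\frac1m\|\mathcal{A}_{\mathcal{I}}(W)\|_1.$$ Let $f(X)=\frac1m\|\mathcal{A}(XX^\top)-b\|_1$ for $X\in\mathbb{R}^{d\times r}$. Then for all $X\in\mathbb{R}^{d\times r}$, $$f(X)-f(X_\sharp)\ge\kappa_3\sqrt{2(\sqrt2-1)}\,\sigma_r(X_\sharp)\,\mathrm{dist}\big(X,\mathcal{D}^*(M_\sharp)\big).$$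
   Context: For $\mathcal{J}\subset\{1,\dots,m\}$, $\mathcal{A}_{\mathcal{J}}(W)=(\mathcal{A}(W)_i)_{i\in\mathcal{J}}$, and $\mathcal{I}^c$ is the complement of $\mathcal{I}$. $\mathcal{D}^*(M_\sharp)=\{X_\sharp R:R\in O(r)\}$, where $O(r)$ is the orthogonal group, and $\mathrm{dist}$ is Frobenius distance. $\sigma_r$ denotes the $r$-th largest singular value. *)

(* the reals are modelled by an arbitrary real closed field R. *)
From HB Require Import structures.
From mathcomp Require Import all_boot all_order all_algebra.
Set Implicit Arguments. Unset Strict Implicit. Unset Printing Implicit Defensive.
Import Order.TTheory GRing.Theory Num.Theory.
Local Open Scope ring_scope.

Definition frob (R : rcfType) (p q : nat) (W : 'M[R]_(p, q)) : R :=
  Num.sqrt (\sum_(i < p) \sum_(j < q) W i j ^+ 2).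

Definition l1_on (R : rcfType) (m : nat) (J : {set 'I_m}) (v : 'rV[R]_m) : R :=
  \sum_(i < m | i \in J) `|v 0 i|.

Definition orthogonal (R : rcfType) (r : nat) (Q : 'M[R]_r) : Prop :=
  Q^T *m Q = 1%:M.

(* s is sigma_r(X) for X : d x r, i.e. the r-th largest (= smallest) singular
   value: the square root of the smallest eigenvalue of the r x r Gram matrix X^T X. *)
Definition is_sigma_r (R : rcfType) (d r : nat) (X : 'M[R]_(d, r)) (s : R) : Prop :=
  exists lam : R, eigenvalue (X^T *m X) lam /\
    (forall mu : R, eigenvalue (X^T *m X) mu -> lam <= mu) /\
    s = Num.sqrt lam.

(* delta = dist(X, D^*(M)) = inf_{Q in O(r)} ||X - Xs Q||_F  (greatest lower bound). *)
Definition is_dist_Dstar (R : rcfType) (d r : nat) (Xs X : 'M[R]_(d, r)) (delta : R) : Prop :=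
  (forall Q : 'M[R]_r, orthogonal Q -> delta <= frob (X - Xs *m Q)) /\
  (forall e : R, (forall Q : 'M[R]_r, orthogonal Q -> e <= frob (X - Xs *m Q)) -> e <= delta).

Definition fobj (R : rcfType) (d r m : nat) (A : {linear 'M[R]_d -> 'rV[R]_m})
  (b : 'rV[R]_m) (X : 'M[R]_(d, r)) : R :=
  (m%:R)^-1 * l1_on [set: 'I_m] (A (X *m X^T) - b).

From Pilot Require Import Defs.
From HB Require Import structures.
From mathcomp Require Import all_boot all_order all_algebra.
From mathcomp.real_closed Require Import complex.
From mathcomp Require Import ring lra.
(* all_algebra exports MathComp's [orthogonal] for sesquilinear forms; import
   Defs again so that [orthogonal] denotes membership in the orthogonal group. *)
Import Defs.
Import Order.TTheory GRing.Theory Num.Theory.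
Set Implicit Arguments. Unset Strict Implicit. Unset Printing Implicit Defensive.
Local Open Scope ring_scope.

(* Let W = X X^T - Xs Xs^T.  The proof has two halves.
   1. Loss sharpness: since b agrees with A(Xs Xs^T) off I, the triangle
      inequality on I gives f(X) - f(Xs) >= (1/m)(||A_{I^c} W||_1 - ||A_I W||_1),
      and W has rank at most 2r, so condition (ii) gives
      f(X) - f(Xs) >= kappa3 ||W||_F.
   2. Gram difference versus distance: choose Q orthogonal with Q^T Xs^T X
      symmetric positive semidefinite (polar decomposition) and set Y = Xs Q.
      Expanding ||X X^T - Y Y^T||_F^2 in traces and completing a square gives
      ||W||_F^2 >= 2 (sqrt 2 - 1) sigma_r(Xs)^2 ||X - Y||_F^2, and
      ||X - Y||_F >= dist(X, D(M)) by definition of the distance. *)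

(* A real symmetric matrix of positive size has a real eigenvalue: seen in
   R[i] it is hermitian, hence unitarily diagonalisable with real diagonal
   entries, and these are roots of the (real) characteristic polynomial. *)
Lemma symmetric_has_eigenvalue (R : rcfType) n (A : 'M[R]_n.+1) :
  A^T = A -> exists a, eigenvalue A a.
Proof.
move=> sA.
pose A' := map_mx (real_complex R) A.
have hA : A' \is hermsymmx.
  apply: realsym_hermsym.
    rewrite qualifE /=; apply/eqP; rewrite expr0 scale1r; apply/matrixP => i j.
    by rewrite !mxE -[in LHS]sA mxE.
  by apply/mxOverP => i j; rewrite /A' mxE complex_real.
have /hermitian_normalmx /orthomx_spectralP eA := hA.
have Dr := hermitian_spectral_diag_real hA.
set P := spectralmx A' in eA.
set D := spectral_diag A' in eA Dr.
have Pu : P \in unitmx by apply: spectral_unit.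
have PA : P *m A' = diag_mx D *m P by rewrite {1}eA !mulmxA mulmxV // mul1mx.
have ev : eigenvalue A' (D 0 0).
  apply/eigenvalueP; exists (row 0 P).
    rewrite -row_mul PA; apply/rowP => j; rewrite !mxE (bigD1 0) //= mxE eqxx.
    rewrite mulr1n big1 ?addr0 // => k nk.
    by rewrite mxE eq_sym (negbTE nk) mulr0n mul0r.
  apply/negP => /eqP r0.
  move: Pu; rewrite unitmxE (expand_det_row _ 0) big1 ?unitr0 // => j _.
  by move/rowP: r0 => /(_ j); rewrite !mxE => ->; rewrite mul0r.
have /complex_realP [x ex] : D 0 0 \is Num.real by apply: (mxOverP Dr).
exists x; move: ev; rewrite ex !eigenvalue_root_char -map_char_poly.
by rewrite fmorph_root.
Qed.

Section RealMatrices.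
Variable R : rcfType.

Lemma orthogonal_tr n (Q : 'M[R]_n) : orthogonal Q -> orthogonal Q^T.
Proof. by rewrite /orthogonal trmxK => /mulmx1C. Qed.

Lemma orthogonal_mul n (P Q : 'M[R]_n) :
  orthogonal P -> orthogonal Q -> orthogonal (P *m Q).
Proof.
by move=> oP oQ; rewrite /orthogonal trmx_mul mulmxA -(mulmxA _ P^T) oP mulmx1.
Qed.

Lemma orthogonal_deflated n (H : 'M[R]_(1 + n)) (U : 'M[R]_n) :
  orthogonal H -> orthogonal U -> orthogonal (H^T *m block_mx 1%:M 0 0 U).
Proof.
move=> oH oU; apply: orthogonal_mul; first exact: orthogonal_tr.
rewrite /orthogonal tr_block_mx mulmx_block !trmx0 !mulmx0 !mul0mx !addr0 !add0r.
by rewrite trmx1 mulmx1 oU -scalar_mx_block.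
Qed.

Lemma dotE n (u v : 'rV[R]_n) : (u *m v^T) 0 0 = \sum_i u 0 i * v 0 i.
Proof. by rewrite mxE; apply: eq_bigr => i _; rewrite mxE. Qed.

Lemma dot_self_ge0 n (u : 'rV[R]_n) : 0 <= (u *m u^T) 0 0.
Proof. by rewrite dotE sumr_ge0 // => i _; rewrite -expr2 sqr_ge0. Qed.

Lemma dot_self_eq0 n (u : 'rV[R]_n) : (u *m u^T) 0 0 = 0 -> u = 0.
Proof.
rewrite dotE => s0; apply/rowP => i; rewrite mxE.
have pos j : predT j -> 0 <= u 0 j * u 0 j by rewrite -expr2 sqr_ge0.
by move/eqP: (psumr_eq0P pos s0 (i := i) isT); rewrite mulf_eq0 orbb => /eqP.
Qed.

Lemma dot_self_gt0 n (u : 'rV[R]_n) : u != 0 -> 0 < (u *m u^T) 0 0.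
Proof.
by move=> un; rewrite lt_def dot_self_ge0 andbT; apply: contraNneq un => /dot_self_eq0 ->.
Qed.

Lemma unit_rescaling n (v : 'rV[R]_n) : v != 0 ->
  exists t, 0 < t /\ (t *: v) *m (t *: v)^T = 1%:M.
Proof.
move=> vn; set c := (v *m v^T) 0 0.
have cp : 0 < c by apply: dot_self_gt0.
exists (Num.sqrt c)^-1; split; first by rewrite invr_gt0 sqrtr_gt0.
rewrite linearZ /= -scalemxAl -scalemxAr scalerA [v *m _]mx11_scalar -/c.
rewrite scale_scalar_mx -invfM -expr2 sqr_sqrtr ?ltW // mulVf //.
by rewrite gt_eqF.
Qed.

Lemma reflection_orthogonal n (W : 'M[R]_n) k c :
  W^T = W -> W *m W = c *: W -> k * k * c = k + k -> orthogonal (1%:M - k *: W).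
Proof.
rewrite /orthogonal => WT WW kk; have -> : (1%:M - k *: W)^T = 1%:M - k *: W.
  by rewrite linearB linearZ /= trmx1 WT.
rewrite mulmxBl mul1mx mulmxBr mulmx1 -scalemxAl -scalemxAr.
by rewrite scalerA WW scalerA kk scalerDl opprB addrK subrK.
Qed.

Lemma unit_row_completion n (v : 'rV[R]_n.+1) : v *m v^T = 1%:M ->
  exists H : 'M[R]_n.+1, orthogonal H /\ row 0 H = v.
Proof.
move=> vv.
pose e0 : 'rV[R]_n.+1 := delta_mx 0 0.
have [->|vne] := eqVneq v e0.
  by exists 1%:M; rewrite /orthogonal trmx1 mulmx1 row1.
pose w := v - e0; pose c := (w *m w^T) 0 0.
have w0 : w 0 0 = v 0 0 - 1 by rewrite !mxE.
have cE : c = - 2 * w 0 0.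
  have vv1 : v 0 0 ^+ 2 + \sum_(i | i != 0) v 0 i ^+ 2 = 1.
    move/matrixP: vv => /(_ 0 0); rewrite dotE (bigD1 0) //= mxE eqxx mulr1n => <-.
    by rewrite expr2; congr (_ + _); apply: eq_bigr => i _; rewrite expr2.
  rewrite /c dotE (bigD1 0) //= w0.
  have -> : \sum_(i | i != 0) w 0 i * w 0 i = \sum_(i | i != 0) v 0 i ^+ 2.
    by apply: eq_bigr => i ni; rewrite !mxE (negbTE ni) andbF subr0 expr2.
  move: vv1; set s := \sum_(i | _) _ => vv1.
  have -> : s = 1 - v 0 0 ^+ 2 by rewrite -vv1 addrC addKr.
  ring.
have cne : c != 0.
  by apply: contra_neq vne => /dot_self_eq0 /eqP; rewrite subr_eq0 => /eqP.
pose k := 2 / c.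
exists (1%:M - k *: (w^T *m w)); split.
  apply: (@reflection_orthogonal _ _ k c); first by rewrite trmx_mul trmxK.
    rewrite mulmxA -(mulmxA _ w) [w *m _]mx11_scalar -/c mul_mx_scalar.
    by rewrite -scalemxAl.
  by rewrite /k; field.
have kw : k * w 0 0 = -1.
  by move: cne; rewrite /k cE => cne; field; move: cne; rewrite mulf_eq0 => /norP[].
apply/rowP => j; rewrite !mxE big_ord1 !mxE !eqxx /= mulr1n mulrA.
have -> : (ord0 : 'I_1) = 0 by apply/val_inj.
rewrite -w0 kw; case: (eqVneq j 0) => [->|nj] /=; ring.
Qed.

Lemma first_row_conj n (H K B : 'M[R]_n) (u v : 'rV[R]_n) a (i0 : 'I_n) :
  orthogonal K -> row i0 H = u -> u *m B = a *: v -> row i0 K = v ->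
  forall j, (H *m B *m K^T) i0 j = a * (i0 == j)%:R.
Proof.
move=> oK Hu uB Kv j.
have : row i0 (H *m B *m K^T) = a *: row i0 1%:M.
  by rewrite !row_mul Hu uB -scalemxAl -Kv -row_mul (mulmx1C oK).
by move/rowP/(_ j); rewrite !mxE.
Qed.

Lemma deflate n (B H K : 'M[R]_(1 + n)) a (U' V' : 'M[R]_n) (s' : 'rV[R]_n) :
  orthogonal H -> orthogonal K ->
  (forall j, (H *m B *m K^T) 0 j = a * (0 == j)%:R) ->
  (forall i, (H *m B *m K^T) i 0 = a * (0 == i)%:R) ->
  drsubmx (H *m B *m K^T) = U' *m diag_mx s' *m V'^T ->
  B = (H^T *m block_mx 1%:M 0 0 U') *m diag_mx (row_mx a%:M s')
        *m (K^T *m block_mx 1%:M 0 0 V')^T.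
Proof.
move=> oH oK row0 col0 edr.
have -> : B = H^T *m (H *m B *m K^T) *m K.
  by rewrite !mulmxA oH mul1mx -mulmxA oK mulmx1.
move: (H *m B *m K^T) row0 col0 edr => B1 row0 col0 edr.
have l0 : lshift n (0 : 'I_1) = 0 by apply/val_inj.
have eB1 : B1 = block_mx a%:M 0 0 (drsubmx B1).
  rewrite -[B1 in LHS]submxK; congr block_mx; apply/matrixP => i j;
  by rewrite !mxE ?ord1 ?l0 ?row0 ?col0 ?eqxx ?mulr1 /= ?mulr0.
rewrite eB1 {}edr diag_mx_row trmx_mul trmxK tr_block_mx !trmx0 trmx1.
have -> : diag_mx (a%:M : 'rV_1) = a%:M by apply/matrixP => i j; rewrite !ord1 !mxE.
rewrite -!mulmxA; congr (_ *m _); rewrite !mulmxA !mulmx_block.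
by rewrite !(mulmx0, mul0mx, mulmx1, mul1mx, addr0, add0r).
Qed.

Theorem symmetric_spectral n (A : 'M[R]_n) : A^T = A ->
  exists (V : 'M_n) (d : 'rV_n), orthogonal V /\ A = V *m diag_mx d *m V^T.
Proof.
elim: n A => [|n IH] A sA.
  by exists 1%:M, 0; split; [rewrite /orthogonal trmx1 mulmx1 | apply/matrixP => [[]]].
have [a /eigenvalueP [v va vn]] := symmetric_has_eigenvalue sA.
have [t [_ uu]] := unit_rescaling vn.
have ua : (t *: v) *m A = a *: (t *: v) by rewrite -scalemxAl va !scalerA mulrC.
have [H [oH Hu]] := unit_row_completion uu.
have row0 := first_row_conj oH Hu ua Hu.
have sA1 : (H *m A *m H^T)^T = H *m A *m H^T by rewrite !trmx_mul trmxK sA mulmxA.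
have col0 i : (H *m A *m H^T) i 0 = a * (0 == i)%:R by rewrite -sA1 mxE row0.
have [|V' [d' [oV' eA']]] := IH (drsubmx (H *m A *m H^T : 'M_(1 + n))).
  by rewrite trmx_drsub sA1.
exists (H^T *m (block_mx 1%:M 0 0 V' : 'M_(1 + n))),
  (row_mx (a%:M : 'rV_1) d' : 'rV_(1 + n)); split.
  exact: orthogonal_deflated.
exact: (deflate oH oH row0 col0 eA').
Qed.

(* Take v a unit eigenvector of B^T B; then
   u is v B^T normalised, or any unit vector of the left kernel of B if
   v B^T = 0. *)
Lemma singular_pair n (B : 'M[R]_n.+1) : exists sig (u v : 'rV[R]_n.+1),
  [/\ 0 <= sig, u *m u^T = 1%:M, v *m v^T = 1%:M, u *m B = sig *: v
    & v *m B^T = sig *: u].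
Proof.
have sS : (B^T *m B)^T = B^T *m B by rewrite trmx_mul trmxK.
have [mu /eigenvalueP [v0 va vn]] := symmetric_has_eigenvalue sS.
have [t0 [_ vv]] := unit_rescaling vn.
set v := t0 *: v0 in vv.
have vS : v *m (B^T *m B) = mu *: v by rewrite /v -scalemxAl va !scalerA mulrC.
have [y0|yn] := eqVneq (v *m B^T) 0.
  have vnz : v != 0.
    apply/eqP => v_eq0; move/matrixP: vv => /(_ 0 0).
    by rewrite v_eq0 mul0mx !mxE eqxx /= => /eqP; rewrite eq_sym oner_eq0.
  have : \det B^T == 0 by apply/det0P; exists v.
  rewrite det_tr => /det0P [u0 u0n u0B].
  have [t1 [_ uu]] := unit_rescaling u0n.
  exists 0, (t1 *: u0), v; split => //.
  - by rewrite -scalemxAl u0B scaler0 scale0r.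
  - by rewrite y0 scale0r.
have [t [tp uu]] := unit_rescaling yn.
have tmu : t * t * mu = 1.
  move/matrixP: uu => /(_ 0 0); rewrite linearZ /= -scalemxAl -scalemxAr.
  rewrite trmx_mul trmxK mulmxA -(mulmxA v) vS -scalemxAl vv scalerA.
  by rewrite !mxE eqxx /= mulr1 mulrA.
exists t^-1, (t *: (v *m B^T)), v; split => //.
- by rewrite invr_ge0 ltW.
- rewrite -scalemxAl -mulmxA vS scalerA; congr (_ *: _).
  by rewrite -[t^-1]mulr1 -tmu; field; rewrite gt_eqF.
- by rewrite scalerA mulVf ?gt_eqF // scale1r.
Qed.

Lemma row_mx_ge0 n (a : R) (s : 'rV[R]_n) : 0 <= a -> (forall i, 0 <= s 0 i) ->
  forall i, 0 <= (row_mx (a%:M : 'rV_1) s : 'rV_(1 + n)) 0 i.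
Proof.
move=> a0 s0 i; rewrite -(splitK i); case: (split i) => k /=.
  by rewrite row_mxEl mxE ord1 eqxx mulr1n.
by rewrite row_mxEr.
Qed.

Theorem svd n (B : 'M[R]_n) : exists (U V : 'M_n) (s : 'rV_n),
  [/\ orthogonal U, orthogonal V, (forall i, 0 <= s 0 i) &
      B = U *m diag_mx s *m V^T].
Proof.
elim: n B => [|n IH] B.
  exists 1%:M, 1%:M, 0; rewrite /orthogonal trmx1 mulmx1; split => //.
    by move=> i; rewrite mxE.
  by apply/matrixP => [[]].
have [sig [u [v [sig0 uu vv uB vB]]]] := singular_pair B.
have [Hu [oHu Hu0]] := unit_row_completion uu.
have [Hv [oHv Hv0]] := unit_row_completion vv.
have row0 := first_row_conj oHv Hu0 uB Hv0.
have col0 i : (Hu *m B *m Hv^T) i 0 = sig * (0 == i)%:R.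
  have eT : (Hu *m B *m Hv^T)^T = Hv *m B^T *m Hu^T by rewrite !trmx_mul trmxK mulmxA.
  by have := first_row_conj oHu Hv0 vB Hu0 i; rewrite -eT mxE.
have [U' [V' [s' [oU' oV' s0' eB']]]] := IH (drsubmx (Hu *m B *m Hv^T : 'M_(1 + n))).
exists (Hu^T *m (block_mx 1%:M 0 0 U' : 'M_(1 + n))),
  (Hv^T *m (block_mx 1%:M 0 0 V' : 'M_(1 + n))),
  (row_mx (sig%:M : 'rV_1) s' : 'rV_(1 + n)); split.
- exact: orthogonal_deflated.
- exact: orthogonal_deflated.
- exact: row_mx_ge0.
- exact: (deflate oHu oHv row0 col0 eB').
Qed.

Lemma quad_diag n (w s : 'rV[R]_n) :
  (w *m diag_mx s *m w^T) 0 0 = \sum_i s 0 i * w 0 i ^+ 2.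
Proof. by rewrite mul_mx_diag dotE; apply: eq_bigr => i _; rewrite mxE; ring. Qed.

(* Polar decomposition: every square B can be rotated by an orthogonal Q
   into a symmetric positive semidefinite matrix Q^T B (take Q = U V^T
   from an SVD B = U diag s V^T). *)
Lemma polar n (B : 'M[R]_n) : exists Q : 'M_n,
  [/\ orthogonal Q, (Q^T *m B)^T = Q^T *m B &
      forall u : 'rV_n, 0 <= (u *m (Q^T *m B) *m u^T) 0 0].
Proof.
have [U [V [s [oU oV s0 eB]]]] := svd B.
have eP : (U *m V^T)^T *m B = V *m diag_mx s *m V^T.
  by rewrite eB trmx_mul trmxK !mulmxA -(mulmxA V U^T) oU mulmx1.
exists (U *m V^T); split.
- by apply: orthogonal_mul => //; apply: orthogonal_tr.
- by rewrite eP !trmx_mul trmxK tr_diag_mx mulmxA.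
- move=> u; rewrite eP !mulmxA -(mulmxA (u *m V *m diag_mx s)) -trmx_mul.
  by rewrite quad_diag; apply: sumr_ge0 => i _; rewrite mulr_ge0 ?sqr_ge0.
Qed.

Lemma rayleigh n (N : 'M[R]_n) lam : N^T = N ->
  (forall mu, eigenvalue N mu -> lam <= mu) ->
  forall u : 'rV_n, lam * (u *m u^T) 0 0 <= (u *m N *m u^T) 0 0.
Proof.
move=> sN hl u.
have [V [d [oV eN]]] := symmetric_spectral sN.
have diag_eigen i : eigenvalue N (d 0 i).
  apply/eigenvalueP; exists (row i V^T).
    rewrite -row_mul (_ : V^T *m N = diag_mx d *m V^T); last first.
      by rewrite eN !mulmxA oV mul1mx.
    by rewrite row_mul row_diag_mx -scalemxAl -rowE.
  apply/eqP => r0; move/matrixP: oV => /(_ i i).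
  rewrite -[(V^T *m V) i i](_ : (row i V^T *m V) 0 i = _); last by rewrite -row_mul mxE.
  by rewrite r0 mul0mx !mxE eqxx /= => /eqP; rewrite eq_sym oner_eq0.
have -> : u *m N *m u^T = (u *m V) *m diag_mx d *m (u *m V)^T.
  by rewrite eN trmx_mul !mulmxA.
have -> : u *m u^T = (u *m V) *m (u *m V)^T.
  by rewrite trmx_mul mulmxA -(mulmxA u) (mulmx1C oV) mulmx1.
rewrite quad_diag dotE mulr_sumr; apply: ler_sum => i _.
by rewrite -expr2 ler_wpM2r ?sqr_ge0 ?diag_eigen ?hl.
Qed.

End RealMatrices.

Section GramDifference.
Variable R : rcfType.

Lemma tr_quad d r (D : 'M[R]_(d, r)) (P : 'M_r) :
  \tr (D *m P *m D^T) = \sum_i (row i D *m P *m (row i D)^T) 0 0.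
Proof.
apply: eq_bigr => i _.
have -> : (D *m P *m D^T) i i = (row i (D *m P) *m D^T) 0 i.
  by rewrite -row_mul [RHS]mxE.
by rewrite row_mul !mxE; apply: eq_bigr => k _; rewrite !mxE.
Qed.

Lemma tr_gram_ge0 d r (D : 'M[R]_(d, r)) : 0 <= \tr (D *m D^T).
Proof.
rewrite -[D in D *m _]mulmx1 tr_quad; apply: sumr_ge0 => i _.
by rewrite mulmx1 dot_self_ge0.
Qed.

Lemma frob_tr d r (W : 'M[R]_(d, r)) : frob W = Num.sqrt (\tr (W *m W^T)).
Proof.
congr Num.sqrt; apply: eq_bigr => i _; rewrite mxE; apply: eq_bigr => j _.
by rewrite mxE expr2.
Qed.

(* The scalar inequality behind the Procrustes estimate, with s = sqrt 2,
   a = tr(S^2), b = tr(N G), c = tr(S G), e = tr(G^2) and g = ||D||_F^2: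
   the first hypothesis is ||G + s S||_F^2 >= 0. *)
Lemma procrustes_scalar (s lam a b c e g : R) :
  s * s = 2 -> 0 <= s -> 0 <= e + 2 * s * c + 2 * a ->
  0 <= b + c -> lam * g <= b ->
  2 * (s - 1) * lam * g <= 2 * a + 2 * b + 4 * c + e.
Proof.
move=> s2 s0 hsq hbc hb.
have s_ge1 : 1 <= s by nra.
have s_le2 : s <= 2 by nra.
have h1 : 0 <= (4 - 2 * s) * (b + c) by rewrite mulr_ge0 // subr_ge0; lra.
have h2 : (2 * s - 2) * (lam * g) <= (2 * s - 2) * b.
  by rewrite ler_wpM2l // subr_ge0; lra.
nra.
Qed.

(* Procrustes-type estimate: if Y^T X is symmetric positive semidefinite and
   lam bounds the Gram form of Y from below, then
   ||X X^T - Y Y^T||_F^2 >= 2 (sqrt 2 - 1) lam ||X - Y||_F^2.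
   Writing D = X - Y, S = Y^T D (symmetric), N = Y^T Y and G = D^T D, the
   left-hand side is 2 tr(S^2) + 2 tr(N G) + 4 tr(S G) + tr(G^2). *)
Lemma gram_difference_bound d r (X Y : 'M[R]_(d, r)) lam :
  (Y^T *m X)^T = Y^T *m X ->
  (forall u : 'rV_r, 0 <= (u *m (Y^T *m X) *m u^T) 0 0) ->
  (forall u : 'rV_r, lam * (u *m u^T) 0 0 <= (u *m (Y^T *m Y) *m u^T) 0 0) ->
  2 * (Num.sqrt 2 - 1) * lam * \tr ((X - Y) *m (X - Y)^T)
   <= \tr ((X *m X^T - Y *m Y^T) *m (X *m X^T - Y *m Y^T)^T).
Proof.
move=> sP pP rN.
have [D eX] : exists D, X = Y + D by exists (X - Y); rewrite addrC subrK.
rewrite eX in sP pP *; have -> : Y + D - Y = D by rewrite addrC addKr.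
set S := Y^T *m D; set N := Y^T *m Y; set G := D^T *m D.
have eP : Y^T *m (Y + D) = N + S by rewrite mulmxDr.
rewrite eP in sP pP.
have sN : N^T = N by rewrite trmx_mul trmxK.
have sG : G^T = G by rewrite trmx_mul trmxK.
have sS : S^T = S by move: sP; rewrite linearD /= sN => /addrI.
have DS : D^T *m Y = S by rewrite -sS trmx_mul trmxK.
have cyc (A C : 'M[R]_(d, r)) (B E : 'M[R]_(r, d)) :
    \tr (A *m B *m (C *m E)) = \tr ((B *m C) *m (E *m A)).
  by rewrite -!mulmxA mxtrace_mulC !mulmxA.
have expand : \tr (((Y + D) *m (Y + D)^T - Y *m Y^T) *m ((Y + D) *m (Y + D)^T - Y *m Y^T)^T)
    = 2 * \tr (S *m S) + 2 * \tr (N *m G) + 4 * \tr (S *m G) + \tr (G *m G).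
  have -> : (Y + D) *m (Y + D)^T - Y *m Y^T = Y *m D^T + D *m Y^T + D *m D^T.
    rewrite (raddfD (@trmx R d r)) !mulmxDl !mulmxDr.
    by rewrite addrAC [Y *m Y^T + _]addrC addrK addrA.
  rewrite !(raddfD (@trmx R d d)) /= !trmx_mul !trmxK !mulmxDl !mulmxDr !mxtraceD.
  rewrite !cyc DS -/S -/G -/N (mxtrace_mulC G N) (mxtrace_mulC G S).
  ring.
set s := Num.sqrt 2 : R.
have s2 : s * s = 2 by rewrite -expr2 sqr_sqrtr.
have square : 0 <= \tr (G *m G) + 2 * s * \tr (S *m G) + 2 * \tr (S *m S).
  have := tr_gram_ge0 (G + s *: S).
  have -> : (G + s *: S)^T = G + s *: S by rewrite linearD linearZ /= sG sS.
  rewrite mulmxDl !mulmxDr -!scalemxAl -!scalemxAr !mxtraceD !mxtraceZ.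
  by rewrite (mxtrace_mulC G S) mulrA s2; lra.
have psd : 0 <= \tr (N *m G) + \tr (S *m G).
  rewrite -mxtraceD -mulmxDl /G mulmxA mxtrace_mulC mulmxA tr_quad.
  by apply: sumr_ge0 => i _; apply: pP.
have lower : lam * \tr (D *m D^T) <= \tr (N *m G).
  rewrite /G mulmxA (mxtrace_mulC (N *m D^T) D) mulmxA tr_quad.
  rewrite -[D in \tr (D *m _)]mulmx1 tr_quad mulr_sumr.
  by apply: ler_sum => i _; rewrite mulmx1; apply: rN.
rewrite expand; apply: procrustes_scalar => //; exact: sqrtr_ge0.
Qed.
End GramDifference.

Section Sharpness.
Variable R : rcfType.

Lemma gram_eigenvalue_ge0 d r (X : 'M[R]_(d, r)) lam :
  eigenvalue (X^T *m X) lam -> 0 <= lam.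
Proof.
move/eigenvalueP => [v vX vn].
have vp := dot_self_gt0 vn.
have quad : (v *m X^T) *m (v *m X^T)^T = lam *: (v *m v^T).
  by rewrite trmx_mul trmxK !mulmxA -(mulmxA v) vX scalemxAl.
by have := dot_self_ge0 (v *m X^T); rewrite quad mxE pmulr_lge0.
Qed.

(* Align Xs by the orthogonal factor Q of a polar decomposition of Xs^T X and
   apply the Procrustes estimate to X and Y = Xs Q. *)
Lemma dist_gram_bound d r (Xs X : 'M[R]_(d, r)) sigma delta :
  is_sigma_r Xs sigma -> is_dist_Dstar Xs X delta ->
  Num.sqrt (2 * (Num.sqrt 2 - 1)) * sigma * delta <= frob (X *m X^T - Xs *m Xs^T).
Proof.
move=> [lam [evl [minl ->]]] [dlow _].
have [Q [oQ sP pP]] := polar (Xs^T *m X).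
set Y := Xs *m Q.
have YX : Y^T *m X = Q^T *m (Xs^T *m X) by rewrite trmx_mul mulmxA.
have YY : Y *m Y^T = Xs *m Xs^T.
  by rewrite trmx_mul mulmxA -(mulmxA Xs) (mulmx1C oQ) mulmx1.
have sN : (Xs^T *m Xs)^T = Xs^T *m Xs by rewrite trmx_mul trmxK.
have rY (u : 'rV_r) : lam * (u *m u^T) 0 0 <= (u *m (Y^T *m Y) *m u^T) 0 0.
  have := rayleigh sN minl (u *m Q^T).
  by rewrite !trmx_mul trmxK !mulmxA -(mulmxA u Q^T Q) oQ mulmx1.
have := gram_difference_bound (X := X) (Y := Y) (lam := lam).
rewrite YX YY => /(_ sP pP rY) bound.
have lam0 := gram_eigenvalue_ge0 evl.
have c1 : 0 <= Num.sqrt 2 - 1 :> R by rewrite subr_ge0 -{1}sqrtr1 ler_sqrt // ler1n.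
apply: (@le_trans _ _ (Num.sqrt (2 * (Num.sqrt 2 - 1)) * Num.sqrt lam * frob (X - Y))).
  by rewrite ler_wpM2l ?mulr_ge0 ?sqrtr_ge0 ?dlow.
rewrite !frob_tr -!sqrtrM ?mulr_ge0 //; exact: ler_wsqrtr.
Qed.

(* Off I the data are exact, so there the loss at X is ||x - s||_1, while on
   I the triangle inequality costs at most ||x - s||_1: the loss gap is at
   least ||x - s||_{1, I^c} - ||x - s||_{1, I}. *)
Lemma l1_loss_gap m (I : {set 'I_m}) (x s b : 'rV[R]_m) :
  (forall i, i \notin I -> b 0 i = s 0 i) ->
  l1_on (~: I) (x - s) - l1_on I (x - s) <=
  l1_on [set: 'I_m] (x - b) - l1_on [set: 'I_m] (s - b).
Proof.
move=> hb; rewrite /l1_on.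
have split_setT (F : 'I_m -> R) : \sum_(i < m | i \in [set: 'I_m]) F i =
    \sum_(i < m | i \in I) F i + \sum_(i < m | i \notin I) F i.
  by rewrite (bigID (mem I)) /=; congr (_ + _); apply: eq_bigl => i; rewrite in_setT.
rewrite !split_setT.
have exact_off : \sum_(i < m | i \notin I) `|(s - b) 0 i| = 0.
  by rewrite big1 // => i hi; rewrite !mxE hb // subrr normr0.
have same_off : \sum_(i < m | i \in ~: I) `|(x - s) 0 i|
    = \sum_(i < m | i \notin I) `|(x - b) 0 i|.
  by apply: eq_big => i; rewrite ?in_setC // => hi; rewrite !mxE hb.
have triangle_on : \sum_(i < m | i \in I) `|(s - b) 0 i|
    - \sum_(i < m | i \in I) `|(x - s) 0 i| <= \sum_(i < m | i \in I) `|(x - b) 0 i|.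
  rewrite -sumrB; apply: ler_sum => i _; rewrite !mxE lerBlDr.
  have -> : s 0 i - b 0 i = (x 0 i - b 0 i) - (x 0 i - s 0 i) by ring.
  exact: ler_normB.
rewrite exact_off same_off addr0; lra.
Qed.

(* X X^T - Xs Xs^T is a difference of two matrices of rank at most r. *)
Lemma rank_gram_difference d r (X Xs : 'M[R]_(d, r)) :
  (\rank (X *m X^T - Xs *m Xs^T)%R <= 2 * r)%N.
Proof.
apply: leq_trans (mxrank_add _ _) _; rewrite mxrank_opp mul2n -addnn.
by apply: leq_add; apply: leq_trans (mxrankM_maxl _ _) (rank_leq_col _).
Qed.

Lemma loss_sharpness d r m (Xs X : 'M[R]_(d, r)) (A : {linear 'M[R]_d -> 'rV[R]_m})
    (b : 'rV[R]_m) (I : {set 'I_m}) (kappa3 : R) :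
  (forall i : 'I_m, i \notin I -> b 0 i = A (Xs *m Xs^T) 0 i) ->
  (forall W : 'M[R]_d, (\rank W <= 2 * r)%N ->
     kappa3 * frob W <= (m%:R)^-1 * l1_on (~: I) (A W) - (m%:R)^-1 * l1_on I (A W)) ->
  kappa3 * frob (X *m X^T - Xs *m Xs^T) <= fobj A b X - fobj A b Xs.
Proof.
move=> hb hW; apply: le_trans (hW _ (rank_gram_difference X Xs)) _.
rewrite /fobj -!mulrBr ler_wpM2l ?invr_ge0 ?ler0n // linearB.
exact: l1_loss_gap.
Qed.

End Sharpness.

Theorem proposition4p6 (R : rcfType) (d r m : nat)
  (Xs : 'M[R]_(d, r)) (A : {linear 'M[R]_d -> 'rV[R]_m}) (b : 'rV[R]_m)
  (I : {set 'I_m}) (kappa3 : R) :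
  \rank Xs = r ->
  0 < kappa3 ->
  (forall i : 'I_m, i \notin I -> b 0 i = A (Xs *m Xs^T) 0 i) ->
  (forall W : 'M[R]_d, (\rank W <= 2 * r)%N ->
     kappa3 * frob W <= (m%:R)^-1 * l1_on (~: I) (A W) - (m%:R)^-1 * l1_on I (A W)) ->
  forall (X : 'M[R]_(d, r)) (sigma delta : R),
    is_sigma_r Xs sigma -> is_dist_Dstar Xs X delta ->
    fobj A b X - fobj A b Xs >=
      kappa3 * Num.sqrt (2 * (Num.sqrt 2 - 1)) * sigma * delta.
Proof.
move=> _ kappa3_gt0 hb hW X sigma delta hsigma hdelta.
apply: le_trans (loss_sharpness X hb hW).
rewrite -!mulrA ler_wpM2l ?(ltW kappa3_gt0) // !mulrA.
exact: dist_gram_bound.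
Qed.
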